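(* Let $d\ge 3$, let $\mathcal M$ be a model of $\mathrm{PQM}_d$, and let $\varphi(x)$ be an $\mathcal L_d$-formula in the single free variable $x$ which is a finite conjunction of literals, each of the form $[t(x):p]$ or $\neg[t(x):p]$ with $p\in\mathbb H_d$ and $t(x)$ a term obtained from $x$ by applying finitely many function symbols $u_U$, $\pi_q$. If $\mathcal M\models\exists x\,\varphi(x)$, then $\mathcal H_d\models\exists x\,\varphi(x)$.
   Context: Notation. For $d\ge 1$, $\mathbb H_d$ is the set of complex linear subspaces of $\mathbb C^d$, ordered by inclusion $\le$, with $\top=\mathbb C^d$, $\bot=\{0\}$, $p^\bot$ the orthogonal complement, $p\wedge q=p\cap q$ and $p\vee q=p+q$. $\mathbb U_d$ is the set of unitary operators on $\mathbb C^d$, and for $U\in\mathbb U_d$, $p\in\mathbb H_d$, $U(p)=\{Uv: v\in p\}$. The Sasaki projection is $p\,\&\,q := q\cap(q^\bot+p)$. Subspaces $p,q$ are compatible iff $p=(p\wedge q)\vee(p\wedge q^\bot)$. Language $\mathcal L_d$: a first-order language without equality and without constants, having a unary function symbol $u_U$ for each $U\in\mathbb U_d$, a unary function symbol $\pi_q$ for each $q\in\mathbb H_d$, and a unary relation symbol $[\,\cdot:p]$ for each $p\in\mathbb H_d$. Theory $\mathrm{PQM}_d$ (over $\mathcal L_d$) has the following axioms, for all $p,q\in\mathbb H_d$ and $U\in\mathbb U_d$: ($\neg\bot$) $\exists x\,\neg[x:\bot]$; ($\top$) $\forall x\,[x:\top]$; ($\le$) if $p\le q$: $\forall x\,([x:p]\to[x:q])$;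 ($\wedge$) if $p,q$ are compatible: $\forall x\,([x:p]\wedge[x:q]\to[x:p\wedge q])$; ($\pi_i$) $\forall x\,([x:p]\to[\pi_q(x):p\,\&\,q])$; ($\pi_c$) if $p\le q$: $\forall x\,([\pi_p(\pi_q(x)):\bot]\to[\pi_p(x):\bot])$; ($\pi_\bot$) $\forall x\,([\pi_q(x):\bot]\to[x:q^\bot])$; ($u_i$) $\forall x\,([x:p]\to[u_U(x):U(p)])$; ($u_e$) $\forall x\,([u_U(x):p]\to[x:U^{-1}(p)])$. Hilbert model $\mathcal H_d$: the $\mathcal L_d$-structure with domain $\mathbb H_d$, $u_U^{\mathcal H_d}(x)=U(x)$, $\pi_q^{\mathcal H_d}(x)=x\,\&\,q$, and $[x:p]^{\mathcal H_d}$ holds iff $x\le p$. *)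

From HB Require Import structures.
From mathcomp Require Import all_boot all_algebra.
From mathcomp Require Import reals complex.
From Stdlib Require List.
Import GRing.Theory Num.Theory.

Set Implicit Arguments.
Unset Strict Implicit.
Unset Printing Implicit Defensive.

Local Open Scope ring_scope.

Section Hilbert.
Variables (R : realType) (d : nat).

Definition vec := 'cV[R[i]]_d.

Definition dotp (v w : vec) : R[i] := \sum_(k < d) (v k 0)^* * w k 0.

Definition is_subspace (S : vec -> Prop) :=
  [/\ S 0, (forall v w, S v -> S w -> S (v + w))
    & (forall (c : R[i]) v, S v -> S (c *: v))].

Record subspace := Subspace { sset :> vec -> Prop; sset_sub : is_subspace sset }.

Definition adj (U : 'M[R[i]]_d) : 'M[R[i]]_d := (map_mx Num.conj U)^T.
Definition is_unitary (U : 'M[R[i]]_d) := adj U *m U = 1%:M /\ U *m adj U = 1%:M.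
Record unitary := Unitary { umx :> 'M[R[i]]_d; umx_unitary : is_unitary umx }.

Definition sle (p q : subspace) : Prop := forall v, p v -> q v.

Lemma top_sub : is_subspace (fun _ => True). Proof. by []. Qed.
Definition stop : subspace := Subspace top_sub.

Lemma bot_sub : is_subspace (fun v => v = 0).
Proof.
split=> //; first by move=> v w -> ->; rewrite addr0.
by move=> c v ->; rewrite scaler0.
Qed.
Definition sbot : subspace := Subspace bot_sub.

Lemma perp_sub (p : subspace) : is_subspace (fun v => forall w, p w -> dotp w v = 0).
Proof.
split.
- by move=> w _; rewrite /dotp big1 // => k _; rewrite mxE mulr0.
- move=> v v' Hv Hv' w pw; rewrite /dotp.
  rewrite (eq_bigr (fun k : 'I_d => (w k 0)^* * v k 0 + (w k 0)^* * v' k 0)).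
    by rewrite big_split /= -!/(dotp _ _) Hv // Hv' // addr0.
  by move=> k _; rewrite mxE mulrDr.
- move=> c v Hv w pw; rewrite /dotp.
  rewrite (eq_bigr (fun k : 'I_d => c * ((w k 0)^* * v k 0))).
    by rewrite -mulr_sumr -/(dotp _ _) Hv // mulr0.
  by move=> k _; rewrite mxE mulrCA.
Qed.
Definition sperp (p : subspace) : subspace := Subspace (perp_sub p).

Lemma meet_sub (p q : subspace) : is_subspace (fun v => p v /\ q v).
Proof.
case: p q => [p [p0 pD pZ]] [q [q0 qD qZ]]; split=> /=.
- by [].
- by move=> v w [? ?] [? ?]; split; [apply: pD | apply: qD].
- by move=> c v [? ?]; split; [apply: pZ | apply: qZ].
Qed.
Definition smeet (p q : subspace) : subspace := Subspace (meet_sub p q).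

Lemma join_sub (p q : subspace) :
  is_subspace (fun v => exists a b, [/\ p a, q b & v = a + b]).
Proof.
case: p q => [p [p0 pD pZ]] [q [q0 qD qZ]]; split=> /=.
- by exists 0, 0; rewrite addr0.
- move=> v w [a [b [pa qb ->]]] [a' [b' [pa' qb' ->]]].
  exists (a + a'), (b + b'); split; [exact: pD | exact: qD |].
  by rewrite addrACA.
- move=> c v [a [b [pa qb ->]]]; exists (c *: a), (c *: b).
  by split; [exact: pZ | exact: qZ | rewrite scalerDr].
Qed.
Definition sjoin (p q : subspace) : subspace := Subspace (join_sub p q).

Definition sasaki (p q : subspace) : subspace := smeet q (sjoin (sperp q) p).

Definition compatible (p q : subspace) : Prop :=
  p = sjoin (smeet p q) (smeet p (sperp q)).

Lemma image_sub (U : 'M[R[i]]_d) (p : subspace) :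
  is_subspace (fun w => exists v, p v /\ w = U *m v).
Proof.
case: p => [p [p0 pD pZ]]; split=> /=.
- by exists 0; rewrite mulmx0.
- by move=> w w' [v [pv ->]] [v' [pv' ->]]; exists (v + v'); rewrite mulmxDr; split=> //; apply: pD.
- by move=> c w [v [pv ->]]; exists (c *: v); rewrite scalemxAr; split=> //; apply: pZ.
Qed.
Definition simage (U : unitary) (p : subspace) : subspace := Subspace (image_sub U p).

Lemma adjK (U : 'M[R[i]]_d) : adj (adj U) = U.
Proof. by apply/matrixP => i j; rewrite !mxE conjCK. Qed.

Lemma adj_unitary (U : unitary) : is_unitary (adj U).
Proof. by case: U => U [h1 h2]; rewrite /is_unitary adjK. Qed.
Definition uinv (U : unitary) : unitary := Unitary (adj_unitary U).

Inductive term :=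
| TVar : term
| TU : unitary -> term -> term
| TPi : subspace -> term -> term.

Inductive literal :=
| LPos : term -> subspace -> literal
| LNeg : term -> subspace -> literal.

Definition conj_formula := seq literal.

Record structure := Structure {
  carrier : Type;
  u_fun : unitary -> carrier -> carrier;
  pi_fun : subspace -> carrier -> carrier;
  rel : carrier -> subspace -> Prop
}.

Fixpoint eval_term (M : structure) (t : term) (x : carrier M) : carrier M :=
  match t with
  | TVar => x
  | TU U t' => @u_fun M U (@eval_term M t' x)
  | TPi q t' => @pi_fun M q (@eval_term M t' x)
  end.

Definition sat_literal (M : structure) (l : literal) (x : carrier M) : Prop :=
  match l with
  | LPos t p => @rel M (@eval_term M t x) p
  | LNeg t p => ~ @rel M (@eval_term M t x) p
  end.

Definition sat_conj (M : structure) (phi : conj_formula) (x : carrier M) : Prop :=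
  forall l, List.In l phi -> @sat_literal M l x.

Definition sat_exists (M : structure) (phi : conj_formula) : Prop :=
  exists x : carrier M, @sat_conj M phi x.

Record PQM (M : structure) : Prop := {
  ax_nbot : exists x : carrier M, ~ rel x sbot;
  ax_top : forall x : carrier M, rel x stop;
  ax_le : forall p q, sle p q -> forall x : carrier M, rel x p -> rel x q;
  ax_meet : forall p q, compatible p q ->
    forall x : carrier M, rel x p -> rel x q -> rel x (smeet p q);
  ax_pi_i : forall p q (x : carrier M), rel x p -> rel (pi_fun q x) (sasaki p q);
  ax_pi_c : forall p q, sle p q ->
    forall x : carrier M, rel (pi_fun p (pi_fun q x)) sbot -> rel (pi_fun p x) sbot;
  ax_pi_bot : forall q (x : carrier M), rel (pi_fun q x) sbot -> rel x (sperp q);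
  ax_u_i : forall p U (x : carrier M), rel x p -> rel (u_fun U x) (simage U p);
  ax_u_e : forall p U (x : carrier M), rel (u_fun U x) p -> rel x (simage (uinv U) p)
}.

Definition Hilbert_model : structure :=
  @Structure subspace (fun U x => simage U x) (fun q x => sasaki x q) sle.

End Hilbert.

(* The heart of the matter is that for d >= 3 every model of PQM_d satisfies
   [x:p] /\ [x:q] -> [x:p /\ q] for all p, q, not only compatible ones.  A Sasaki
   projection onto (p /\ q)^perp followed by (pi_bot) reduces this to the case
   p /\ q = 0, and an induction along an orthogonal basis of p (splitting off one
   basis vector u by a Sasaki projection onto u + p^perp) reduces that case to two
   lines a, b with a /\ b = 0.  For lines, [x:a] and [x:b] force [x:n] whenever the
   projections of a and b onto n^perp are orthogonal.  After rescaling to |a| = |b|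
   and <a,b> = g > 0, and choosing e orthogonal to a and b (this is where d >= 3 is
   used), the lines through a + b + c e and a + b - c e, for a suitable c, are of
   this kind and have a strictly smaller ratio of inner product to squared norm:
   the bound g / |a|^2 <= (N-1)/(N+1) improves to (N-2)/N.  Once the ratio is
   below 1/3, two such lines x a + y b + e and y a + x b - e are orthogonal, and
   two orthogonal lines meet in bot by (wedge).

   With unrestricted meets, each positive literal [t(x):p] pulls back to
   [x : pre t p], and the meet K of these pullbacks satisfies phi in H_d: the
   negative literals transfer because (pi_i) and (u_i) push [x:K] forward to
   [t(x) : t(K)]. *)

From Pilot Require Import Defs.
From HB Require Import structures.
From mathcomp Require Import all_boot all_order all_algebra.
From mathcomp Require Import boolp reals complex ring lra.
Import Order.TTheory GRing.Theory Num.Theory.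

Set Implicit Arguments.
Unset Strict Implicit.
Unset Printing Implicit Defensive.

Local Open Scope ring_scope.
Local Notation "x %:C" := (real_complex _ x) : ring_scope.

Section InnerProduct.
Variables (R : realType) (d : nat).
Local Notation vec := (vec R d).
Implicit Types (u v w : vec) (c : R[i]).

Lemma dotpDr u v w : dotp u (v + w) = dotp u v + dotp u w.
Proof. by rewrite /dotp -big_split; apply: eq_bigr => k _; rewrite mxE mulrDr. Qed.

Lemma dotpZr u c v : dotp u (c *: v) = c * dotp u v.
Proof. by rewrite /dotp mulr_sumr; apply: eq_bigr => k _; rewrite mxE mulrCA. Qed.

Lemma dotpC u v : dotp v u = (dotp u v)^*.
Proof.
by rewrite /dotp rmorph_sum; apply: eq_bigr => k _; rewrite rmorphM /= conjCK mulrC.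
Qed.

Lemma dotpDl u v w : dotp (v + w) u = dotp v u + dotp w u.
Proof. by rewrite dotpC dotpDr rmorphD /= -!dotpC. Qed.

Lemma dotpZl u c v : dotp (c *: v) u = c^* * dotp v u.
Proof. by rewrite dotpC dotpZr rmorphM /= -dotpC. Qed.

Lemma dotp0r u : dotp u 0 = 0.
Proof. by rewrite -(scale0r 0) dotpZr mul0r. Qed.

Lemma dotp0l u : dotp 0 u = 0.
Proof. by rewrite dotpC dotp0r rmorph0. Qed.

Lemma dotpNr u v : dotp u (- v) = - dotp u v.
Proof. by rewrite -scaleN1r dotpZr mulN1r. Qed.

Lemma dotpNl u v : dotp (- v) u = - dotp v u.
Proof. by rewrite dotpC dotpNr rmorphN /= -dotpC. Qed.

Lemma dotpBr u v w : dotp u (v - w) = dotp u v - dotp u w.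
Proof. by rewrite dotpDr dotpNr. Qed.

Lemma dotpBl u v w : dotp (v - w) u = dotp v u - dotp w u.
Proof. by rewrite dotpDl dotpNl. Qed.

Lemma dotpC_eq0 u v : dotp u v = 0 -> dotp v u = 0.
Proof. by move=> uv0; rewrite dotpC uv0 conjC0. Qed.

Lemma dotp_self_ge0 v : 0 <= dotp v v.
Proof. by apply: sumr_ge0 => k _; rewrite mulrC mul_conjC_ge0. Qed.

Lemma dotp_self_eq0 v : dotp v v = 0 -> v = 0.
Proof.
move=> v0; apply/matrixP => k j; rewrite (ord1 j) mxE.
have nneg (l : 'I_d) : true -> 0 <= (v l 0)^* * v l 0.
  by rewrite mulrC mul_conjC_ge0.
by move: (psumr_eq0P nneg v0 (i := k) isT) => /eqP; rewrite mulrC mul_conjC_eq0 => /eqP.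
Qed.

Lemma dotp_self_gt0 v : v != 0 -> 0 < dotp v v.
Proof.
move=> v0; rewrite lt_def dotp_self_ge0 andbT.
by apply: contraNneq v0 => /dotp_self_eq0 ->.
Qed.

End InnerProduct.

Section Subspaces.
Variables (R : realType) (d : nat).
Local Notation vec := (vec R d).
Local Notation subspace := (subspace R d).
Implicit Types (u v w : vec) (c : R[i]) (a b p q r S T X : subspace) (L : seq vec).

Lemma subspace_ext p q : (forall v, p v <-> q v) -> p = q.
Proof.
case: p q => [p p_sub] [q q_sub] /= pq.
have pq_eq : p = q by apply/funext => v; apply/propext.
by subst q; congr Subspace; apply: Prop_irrelevance.
Qed.

Lemma subspace0 p : p 0.
Proof. by case: p => ? []. Qed.

Lemma subspaceD p v w : p v -> p w -> p (v + w).
Proof. by case: p => ? [] /=; auto. Qed.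

Lemma subspaceZ p c v : p v -> p (c *: v).
Proof. by case: p => ? [] /=; auto. Qed.

Lemma subspaceN p v : p v -> p (- v).
Proof. by rewrite -scaleN1r; apply: subspaceZ. Qed.

Lemma subspaceB p v w : p v -> p w -> p (v - w).
Proof. by move=> pv pw; apply/subspaceD/subspaceN. Qed.

Definition sdisjoint p q := forall v, p v -> q v -> v = 0.

Lemma perp_meet_eq0 S v : S v -> sperp S v -> v = 0.
Proof. by move=> Sv Sv'; apply: dotp_self_eq0; apply: Sv'. Qed.

Lemma orth_decomp_uniq S s1 s2 t1 t2 : S s1 -> S s2 ->
  sperp S t1 -> sperp S t2 -> s1 + t1 = s2 + t2 -> s1 = s2.
Proof.
move=> Ss1 Ss2 St1 St2 e; apply/eqP; rewrite -subr_eq0; apply/eqP.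
apply: (perp_meet_eq0 (S := S)); first exact: subspaceB.
have -> : s1 - s2 = t2 - t1 by rewrite -[s1](addrK t1) e addrAC (addrC s2) addrK.
exact: subspaceB.
Qed.

Lemma sline_sub u : is_subspace (fun v => exists c, v = c *: u).
Proof.
split; first by exists 0; rewrite scale0r.
  by move=> v w [c1 ->] [c2 ->]; exists (c1 + c2); rewrite scalerDl.
by move=> c v [c' ->]; exists (c * c'); rewrite scalerA.
Qed.
Definition sline u : subspace := Subspace (sline_sub u).

Lemma sline_id u : sline u u.
Proof. by exists 1; rewrite scale1r. Qed.

Lemma perp_lineP u v : sperp (sline u) v <-> dotp u v = 0.
Proof.
split=> [|uv0 w [c ->]]; first by apply; apply: sline_id.
by rewrite dotpZl uv0 mulr0.
Qed.

Lemma span_sub L : is_subspace (fun v => v \in <<L>>%VS).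
Proof. by split=> [|v w|c v]; [exact: mem0v | exact: memvD | exact: memvZ]. Qed.
Definition sspan L : subspace := Subspace (span_sub L).

Lemma subspace_span S L : {in L, forall w, S w} -> forall v, v \in <<L>>%VS -> S v.
Proof.
move=> SL v /(coord_span (X := in_tuple L)) ->.
apply: (big_ind S); [exact: subspace0 | exact: subspaceD |].
by move=> k _; apply/subspaceZ/SL/mem_nth.
Qed.

Lemma perp_span L t : {in L, forall u, dotp u t = 0} -> sperp (sspan L) t.
Proof.
move=> Lt w /(subspace_span (S := sperp (sline t))) tw.
by apply/dotpC_eq0/perp_lineP/tw => u /Lt /dotpC_eq0 /perp_lineP.
Qed.

Lemma span_orth_decomp L v :
  exists s t, [/\ s \in <<L>>%VS, {in L, forall u, dotp u t = 0} & v = s + t].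
Proof.
elim: L v => [|u L IH] v.
  by exists 0, v; rewrite mem0v add0r.
have [u1 [u2 [Lu1 Lu2 ->]]] := IH u; have [s [t [Ls Lt ->]]] := IH v.
pose k := dotp u2 t / dotp u2 u2.
have u2t : dotp u2 (t - k *: u2) = 0.
  rewrite dotpBr dotpZr; have [/dotp_self_eq0 ->|u2n0] := eqVneq (dotp u2 u2) 0.
    by rewrite dotp0l dotp0r mulr0 subr0.
  by rewrite divfK // subrr.
have Lt' : {in L, forall w, dotp w (t - k *: u2) = 0}.
  by move=> w Lw; rewrite dotpBr dotpZr Lt // Lu2 // mulr0 subrr.
exists (s + k *: u2), (t - k *: u2); split.
- have -> : s + k *: u2 = k *: (u1 + u2) + (s - k *: u1).
    by rewrite scalerDr [RHS]addrC addrA subrK.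
  by rewrite span_cons memv_add ?memvB ?memvZ ?memv_line.
- move=> w; rewrite in_cons => /predU1P [->|/Lt' //].
  by rewrite dotpDl u2t addr0; apply: (perp_span Lt').
- by rewrite addrACA subrr addr0.
Qed.

Definition orth_seq L := pairwise (fun u w => dotp u w == 0) L.

Lemma orth_free L : orth_seq L -> all (fun u => u != 0) L -> free L.
Proof.
elim: L => [|u L IH] /=; first by rewrite nil_free.
case/andP => uL oL /andP [u0 L0]; rewrite free_cons IH // andbT.
apply: contra u0 => Lu; apply/eqP/dotp_self_eq0.
by apply: (perp_span _ Lu) => w /(allP uL) /eqP /dotpC_eq0.
Qed.

Lemma orth_size L : orth_seq L -> all (fun u => u != 0) L -> (size L <= d)%N.
Proof.
move=> oL L0; have /eqP <- := orth_free oL L0.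
by apply: leq_trans (dimvS (subvf _)) _; rewrite dimvf dim_matrix mulr1.
Qed.

Lemma subspace_orth_basis S : exists L, orth_seq L /\ forall v, S v <-> v \in <<L>>%VS.
Proof.
apply: contrapT => noL.
suff orth_lists k : exists L,
    [/\ size L = k, orth_seq L, all (fun u => u != 0) L & {in L, forall w, S w}].
  have [L [sL oL L0 _]] := orth_lists d.+1.
  by move: (orth_size oL L0); rewrite sL ltnn.
elim: k => [|k [L [sL oL L0 SL]]]; first by exists [::].
have [v Sv Lv] : exists2 v, S v & v \notin <<L>>%VS.
  apply: contrapT => SsubL; apply: noL; exists L; split=> // v.
  split=> [Sv|]; last exact: subspace_span.
  by apply: contrapT => /negP Lv; apply: SsubL; exists v.
have [s [t [Ls Lt vst]]] := span_orth_decomp L v.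
exists (t :: L); split=> /=.
- by rewrite sL.
- by apply/andP; split=> //; apply/allP => w /Lt /dotpC_eq0 /eqP.
- by rewrite L0 andbT; apply: contraNneq Lv => t0; rewrite vst t0 addr0.
- move=> w; rewrite in_cons => /predU1P [->|/SL //].
  have -> : t = v - s by rewrite vst addrC addKr.
  exact: subspaceB Sv (subspace_span SL Ls).
Qed.

Lemma orth_decomp S v : exists s t, [/\ S s, sperp S t & v = s + t].
Proof.
have [L [_ SL]] := subspace_orth_basis S.
have [s [t [Ls Lt ->]]] := span_orth_decomp L v.
by exists s, t; split=> // [|w /SL]; [exact/SL | exact: perp_span].
Qed.

Lemma perpK S v : sperp (sperp S) v -> S v.
Proof.
have [s [t [Ss St ->]]] := orth_decomp S v => SSst.
have SSs : sperp (sperp S) s by move=> w /(_ s Ss) /dotpC_eq0.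
have SSt : sperp (sperp S) t by rewrite -(addKr s t); apply/subspaceD/SSst/subspaceN.
by rewrite (perp_meet_eq0 St SSt) addr0.
Qed.

Lemma exists_orth u v : (3 <= d)%N -> exists2 e, e != 0 & dotp u e = 0 /\ dotp v e = 0.
Proof.
move=> d3; have [w _ uvw] : exists2 w, w \in fullv & w \notin <<[:: u; v]>>%VS.
  apply/subvPn; apply: contraL d3 => /dimvS; rewrite dimvf dim_matrix mulr1 => dle.
  by rewrite -ltnNge ltnS (leq_trans dle (dim_span _)).
have [s [t [Ls st vst]]] := span_orth_decomp [:: u; v] w.
exists t; last by split; apply: st; rewrite !inE eqxx ?orbT.
by apply: contraNneq uvw => t0; rewrite vst t0 addr0.
Qed.

Lemma span_cons_perp u L v :
  orth_seq (u :: L) -> v \in <<u :: L>>%VS -> dotp u v = 0 -> v \in <<L>>%VS.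
Proof.
case/andP => uL _; rewrite span_cons => /memv_addP [_ /vlineP [c ->] [w Lw ->]].
have uw : dotp u w = 0.
  by apply/dotpC_eq0/(perp_span _ Lw) => x /(allP uL) /eqP /dotpC_eq0.
rewrite dotpDr dotpZr uw addr0 => /eqP; rewrite mulf_eq0.
by case/orP => [/eqP ->|/eqP /dotp_self_eq0 ->]; rewrite ?scale0r ?scaler0 add0r.
Qed.

Lemma sasaki_le X p q : sle X (sjoin (sperp q) (smeet p q)) -> sle (sasaki X q) p.
Proof.
move=> Xpq v [qv [s [x [qs Xx vsx]]]].
have [s' [m [qs' [pm qm] xsm]]] := Xpq x Xx.
suff -> : v = m by [].
apply: (orth_decomp_uniq (S := q) (t1 := 0) (t2 := s + s')) => //.
- exact: subspace0.
- exact: subspaceD.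
- by rewrite addr0 vsx xsm addrA addrC.
Qed.

Lemma sasaki_perp a r v : sle a (sperp r) -> sasaki r a v -> v = 0.
Proof.
move=> ar [av [s [x [a_s rx vsx]]]]; apply: dotp_self_eq0.
by rewrite {2}vsx dotpDr (a_s v av) (dotpC_eq0 (ar v av x rx)) addr0.
Qed.

Lemma perp_meet_perp q r : sle r q -> sle (sperp (smeet q (sperp r))) (sjoin (sperp q) r).
Proof.
move=> rq v qrv.
have [v1 [v2 [qv1 qv2 vv]]] := orth_decomp q v.
have [s [t [rs rt v1st]]] := orth_decomp r v1.
have qt : q t by rewrite -(addKr s t) -v1st; exact: subspaceD (subspaceN (rq s rs)) qv1.
suff t0 : t = 0 by exists v2, s; split=> //; rewrite vv v1st t0 addr0 addrC.
apply: dotp_self_eq0; have := qrv t (conj qt rt).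
by rewrite vv v1st !dotpDr (dotpC_eq0 (rt s rs)) (qv2 t qt) add0r addr0.
Qed.

Lemma sasaki_meet_disjoint a b :
  sdisjoint (sasaki a (sperp (smeet a b))) (sasaki b (sperp (smeet a b))).
Proof.
move=> x [px [s1 [a0 [ps1 aa0 xe]]]] [_ [s2 [b0 [ps2 bb0 xe']]]].
have [as1 _] := perpK ps1; have [_ bs2] := perpK ps2.
by apply: (perp_meet_eq0 (S := smeet a b) _ px); split; [rewrite xe | rewrite xe'];
  exact: subspaceD.
Qed.

Lemma sasaki_line u q : exists u', sasaki (sline u) q = sline u'.
Proof.
have [s [t [qs qt ust]]] := orth_decomp q u.
exists s; apply: subspace_ext => v; split.
  move=> [qv [s' [w [qs' [c ->] vsw]]]]; exists c.
  apply: (orth_decomp_uniq (S := q) (t1 := - s') (t2 := c *: t)) => //.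
  - exact: subspaceZ.
  - exact: subspaceN.
  - exact: subspaceZ.
  - by rewrite vsw addrAC subrr add0r ust scalerDr.
move=> [c ->]; split; first exact: subspaceZ.
exists (- (c *: t)), (c *: u); split; first exact/subspaceN/subspaceZ.
  by exists c.
by rewrite ust scalerDr (addrC (c *: s)) addKr.
Qed.

Lemma sasaki_line_perp (n a : vec) v : sasaki (sline a) (sperp (sline n)) v ->
  sline (a - (dotp n a / dotp n n) *: n) v.
Proof.
move=> [/perp_lineP nv [s [_ [/perpK [mu ->] [c ->] vsa]]]].
exists c; have [/dotp_self_eq0 n0|nn0] := eqVneq (dotp n n) 0.
  by rewrite vsa n0 !scaler0 add0r subr0.
have mu_eq : mu = - (c * (dotp n a / dotp n n)).
  move: nv; rewrite vsa dotpDr !dotpZr => /eqP; rewrite addr_eq0 => /eqP nv.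
  by apply: (mulIf nn0); rewrite nv mulNr mulrA divfK.
by rewrite vsa mu_eq scalerBr scalerA scaleNr addrC.
Qed.

Lemma perp_join_line_perp T u v :
  sperp (sjoin (sline u) (sperp T)) v -> T v /\ dotp u v = 0.
Proof.
move=> qv; split.
  apply: perpK => w Tw; apply: qv; exists 0, w.
  by split=> //; [exact: subspace0 | rewrite add0r].
by apply: qv; exists u, 0; split; [exact: sline_id | exact: subspace0 | rewrite addr0].
Qed.

Lemma sasaki_join_line T u v :
  T u -> sasaki T (sjoin (sline u) (sperp T)) v -> sline u v.
Proof.
move=> Tu [[_ [t [[c ->] Tt ->]]] [s [h [qs Th e]]]].
have Tt' : T t.
  have -> : t = s + h - c *: u by rewrite -e addrAC subrr add0r.
  exact/subspaceB/subspaceZ/Tu/subspaceD/Th/(perp_join_line_perp qs).1.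
by exists c; rewrite (perp_meet_eq0 Tt' Tt) addr0.
Qed.

Lemma sasaki_join_line_disjoint T u b : T u -> sdisjoint T b ->
  sdisjoint (sline u) (sasaki b (sjoin (sline u) (sperp T))).
Proof.
move=> Tu Tb w [c ->] [qw [s [b0 [qs bb0 e]]]].
have b00 : b0 = 0.
  apply: Tb bb0; rewrite -(addKr s b0) -e.
  exact/subspaceD/subspaceZ/Tu/subspaceN/(perp_join_line_perp qs).1.
by apply: (perp_meet_eq0 qw); rewrite e b00 addr0.
Qed.

End Subspaces.

Section Preimage.
Variables (R : realType) (d : nat).
Local Notation subspace := (subspace R d).
Local Notation eval_hilbert := (@eval_term R d (Hilbert_model R d)).

(* [pre t p] is the largest [Y] with [t(Y) <= p] in the Hilbert model. *)
Fixpoint pre (t : term R d) (p : subspace) : subspace :=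
  match t with
  | TVar => p
  | TU U t' => pre t' (simage (uinv U) p)
  | TPi q t' => pre t' (sjoin (sperp q) (smeet p q))
  end.

Lemma simage_le (U : unitary R d) (Y p : subspace) :
  sle Y (simage (uinv U) p) -> sle (simage U Y) p.
Proof.
move=> Yp _ [y [Yy ->]]; have [w [pw ->]] := Yp y Yy.
by case: U {Yp Yy} => U [_ UU'] /=; rewrite mulmxA UU' mul1mx.
Qed.

Lemma eval_hilbert_le_pre t p Y : sle Y (pre t p) -> sle (eval_hilbert t Y) p.
Proof.
elim: t p => [|U t IH|q t IH] p //= Ypre; first exact/simage_le/IH.
exact/sasaki_le/IH.
Qed.

Definition hilbert_witness (phi : conj_formula R d) : subspace :=
  foldr (fun l K => if l is LPos t p then smeet (pre t p) K else K) (stop R d) phi.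

Lemma hilbert_witness_le phi t p :
  List.In (LPos t p) phi -> sle (hilbert_witness phi) (pre t p).
Proof.
elim: phi => [//|l phi IH] /= [-> v [] //|/IH phiK v].
by case: l => [t' p' [_ /phiK]|t' p' /phiK].
Qed.

End Preimage.

Section RealArithmetic.
Variable R : realType.
Implicit Types (A g E c n : R).

Lemma realc_eq0 (x : R) : (x%:C == 0 :> R[i]) = (x == 0).
Proof. by rewrite -(rmorph0 (real_complex R)) (inj_eq (@complexI _)). Qed.

Lemma conjC_realc (x : R) : (x%:C)^* = x%:C :> R[i].
Proof. exact: conjc_real. Qed.

Lemma complex_gt0_real (z : R[i]) : 0 < z -> exists2 r : R, z = r%:C & 0 < r.
Proof. by case: z => a b; rewrite ltcE /= => /andP [/eqP -> a0]; exists a. Qed.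

Lemma small_angle_coeffs A g E : 0 < E -> 0 < g -> 3 * g < A ->
  exists x y, x * y * (A ^+ 2 - g ^+ 2) = g * E /\ 2 * x * y * A + (x ^+ 2 + y ^+ 2) * g = E.
Proof.
move=> E0 g0 gA; have Ag2 : 0 < A ^+ 2 - g ^+ 2 by nra.
pose P := g * E / (A ^+ 2 - g ^+ 2); pose S := (E - 2 * P * A) / g.
have P0 : 0 <= P by apply: divr_ge0; nra.
have SP0 : 0 <= S - 2 * P.
  have -> : S - 2 * P = E * (A - 3 * g) / (g * (A - g)).
    rewrite /S /P; field.
    by rewrite (lt0r_neq0 g0) (lt0r_neq0 Ag2) lt0r_neq0 // subr_gt0; lra.
  by apply: divr_ge0; nra.
pose u1 := Num.sqrt (S + 2 * P); pose u2 := Num.sqrt (S - 2 * P).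
have u1E : u1 ^+ 2 = S + 2 * P by rewrite sqr_sqrtr //; lra.
have u2E : u2 ^+ 2 = S - 2 * P by rewrite sqr_sqrtr.
pose x := (u1 + u2) / 2; pose y := (u1 - u2) / 2; exists x, y.
have xyP : x * y = P.
  have -> : x * y = (u1 ^+ 2 - u2 ^+ 2) / 4 by rewrite /x /y; field.
  by rewrite u1E u2E; field.
have x2y2S : x ^+ 2 + y ^+ 2 = S.
  have -> : x ^+ 2 + y ^+ 2 = (u1 ^+ 2 + u2 ^+ 2) / 2 by rewrite /x /y; field.
  by rewrite u1E u2E; field.
split; first by rewrite xyP /P divfK // (lt0r_neq0 Ag2).
have -> : 2 * x * y * A = 2 * P * A by rewrite -xyP; ring.
by rewrite x2y2S /S divfK ?(lt0r_neq0 g0) // addrC subrK.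
Qed.

Lemma descent_arith n A g E c : 0 <= n -> 0 < E -> 0 < g -> A <= 3 * g ->
  (n + 2) * g <= n * A -> g * (c ^+ 2 * E) = A ^+ 2 - g ^+ 2 ->
  [/\ c != 0, 0 < 2 * A + 2 * g + c ^+ 2 * E, 0 <= 2 * A + 2 * g - c ^+ 2 * E,
      0 < 2 * A - 2 * g
    & (n + 1) * (2 * A + 2 * g - c ^+ 2 * E) <= (n - 1) * (2 * A + 2 * g + c ^+ 2 * E)].
Proof.
move=> n0 E0 g0 A3g ngA; set t := c ^+ 2 * E => gt.
have gA : g < A by nra.
have t0 : 0 <= t by rewrite /t mulr_ge0 // ?sqr_ge0 // ltW.
have g'0 : 0 <= 2 * A + 2 * g - t.
  have : 0 <= g * (2 * A + 2 * g - t) by nra.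
  by rewrite pmulr_rge0.
split=> //; [|lra|lra|].
- by apply/eqP => c0; move: gt; rewrite /t c0 expr2 !mul0r mulr0; nra.
- have : 0 <= g * ((n - 1) * (2 * A + 2 * g + t) - (n + 1) * (2 * A + 2 * g - t)).
    have -> : g * ((n - 1) * (2 * A + 2 * g + t) - (n + 1) * (2 * A + 2 * g - t))
              = 2 * n * (g * t) - 4 * g * (A + g) by ring.
    by rewrite gt; nra.
  by rewrite pmulr_rge0 // subr_ge0.
Qed.

Lemma exists_descent_length A g : 0 <= g -> g < A ->
  exists N : nat, (N%:R + 1) * g <= (N%:R - 1) * A.
Proof.
move=> g0 gA; have /archi_boundP : 0 <= (A + g) / (A - g) by apply: divr_ge0; lra.
rewrite ltr_pdivrMr ?subr_gt0 // => bound_gt.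
by exists (Num.bound ((A + g) / (A - g))); nra.
Qed.

End RealArithmetic.

Section GramTriple.
Variables (R : realType) (d : nat).
Local Notation vec := (vec R d).
Implicit Types (a b e u v : vec) (A g E x y w : R).

Record gram_triple a b e A g E : Prop := GramTriple {
  gram_aa : dotp a a = A%:C;
  gram_bb : dotp b b = A%:C;
  gram_ab : dotp a b = g%:C;
  gram_ee : dotp e e = E%:C;
  gram_ae : dotp a e = 0;
  gram_be : dotp b e = 0 }.

Definition comb a b e x y w : vec := x%:C *: a + y%:C *: b + w%:C *: e.

Lemma comb_basis a b e :
  [/\ comb a b e 1 0 0 = a, comb a b e 0 1 0 = b & comb a b e 0 0 1 = e].
Proof. by rewrite /comb rmorph0 rmorph1 !scale0r !scale1r ?add0r ?addr0. Qed.

Lemma dotp_comb a b e A g E (tr : gram_triple a b e A g E) x y w x' y' w' :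
  dotp (comb a b e x y w) (comb a b e x' y' w')
  = ((x * x' + y * y') * A + (x * y' + y * x') * g + w * w' * E)%:C.
Proof.
case: tr => aa bb ab ee ae be.
have ba : dotp b a = g%:C by rewrite dotpC ab conjC_realc.
rewrite /comb !(dotpDl, dotpDr, dotpZl, dotpZr) !conjC_realc.
rewrite aa bb ab ba ee (dotpC_eq0 ae) (dotpC_eq0 be) ae be.
by rewrite !rmorphD !rmorphM; ring.
Qed.

Lemma gram_triple_step a b e A g E c : gram_triple a b e A g E ->
  gram_triple (comb a b e 1 1 c) (comb a b e 1 1 (- c)) (comb a b e 1 (-1) 0)
    (2 * A + 2 * g + c ^+ 2 * E) (2 * A + 2 * g - c ^+ 2 * E) (2 * A - 2 * g).
Proof.
move=> tr; split; rewrite (dotp_comb tr) -?(rmorph0 (real_complex R)); congr (_%:C); ring.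
Qed.

Lemma eq_of_gram a b A g :
  dotp a a = A%:C -> dotp b b = A%:C -> dotp a b = g%:C -> A <= g -> b = a.
Proof.
move=> aa bb ab Ag; apply/eqP; rewrite -subr_eq0; apply/eqP/dotp_self_eq0.
have ba : dotp b a = g%:C by rewrite dotpC ab conjC_realc.
have bab : dotp (b - a) (b - a) = (2 * A - 2 * g)%:C.
  by rewrite !(dotpBl, dotpBr) aa bb ab ba !rmorphB !rmorphM; ring.
have := dotp_self_ge0 (b - a); rewrite bab ler0c => ge0.
by rewrite (_ : 2 * A - 2 * g = 0) ?rmorph0 //; lra.
Qed.

Lemma normalize_pair u v : u != 0 -> v != 0 -> dotp u v != 0 ->
  exists mu : R[i], exists A g : R, [/\ mu != 0, dotp u u = A%:C,
    dotp (mu *: v) (mu *: v) = A%:C, dotp u (mu *: v) = g%:C & 0 < A /\ 0 < g].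
Proof.
move=> u0 v0 uv0; set g0 := dotp u v in uv0 *.
have [A uuA A0] := complex_gt0_real (dotp_self_gt0 u0).
have [B vvB B0] := complex_gt0_real (dotp_self_gt0 v0).
have [G GE G0] : exists2 G : R, g0 * g0^* = G%:C & 0 < G.
  by apply: complex_gt0_real; rewrite mul_conjC_gt0.
pose lam := Num.sqrt (A / (G * B)).
have lam2 : lam ^+ 2 = A / (G * B) by rewrite sqr_sqrtr // divr_ge0 // ltW // mulr_gt0.
have lam0 : 0 < lam by rewrite sqrtr_gt0 divr_gt0 // mulr_gt0.
exists (g0^* * lam%:C), A, (G * lam); split=> //.
- by rewrite mulf_neq0 // ?conjC_eq0 // realc_eq0 lt0r_neq0.
- rewrite dotpZl dotpZr vvB rmorphM /= conjCK conjC_realc.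
  have -> : g0 * lam%:C * (g0^* * lam%:C * B%:C) = (g0 * g0^*) * (lam ^+ 2 * B)%:C.
    by rewrite rmorphM rmorphXn; ring.
  by rewrite GE -rmorphM lam2; congr (_%:C); field; rewrite !lt0r_neq0.
- rewrite dotpZr -/g0.
  have -> : g0^* * lam%:C * g0 = (g0 * g0^*) * lam%:C by ring.
  by rewrite GE -rmorphM.
- by split; rewrite // mulr_gt0.
Qed.

End GramTriple.

Section PQMTheory.
Variables (R : realType) (d : nat) (M : structure R d).
Hypothesis hM : PQM M.
Local Notation vec := (vec R d).
Local Notation subspace := (subspace R d).
Local Notation holds := (@Defs.rel R d M).
Implicit Types (z : carrier M) (a b e u v n : vec) (p q S T : subspace) (A g E : R).

Lemma holds_le p q z : sle p q -> holds z p -> holds z q.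
Proof. by move=> pq; apply: (ax_le hM pq). Qed.

Lemma holds_orth_bot p q z : (forall v w, p v -> q w -> dotp v w = 0) ->
  holds z p -> holds z q -> holds z (sbot R d).
Proof.
move=> pq zp zq.
have pq_compat : compatible p q.
  apply: subspace_ext => v; split=> [pv|[a [b [[pa _] [pb _] ->]]]]; last exact: subspaceD.
  exists 0, v; rewrite add0r; split=> //; first by split=> //; apply: subspace0.
  by split=> // w qw; apply/dotpC_eq0/pq.
by apply: holds_le (ax_meet hM pq_compat zp zq) => v [pv qv]; apply/dotp_self_eq0/pq.
Qed.

Lemma holds_line_orth_bot u v z : dotp u v = 0 ->
  holds z (sline u) -> holds z (sline v) -> holds z (sbot R d).
Proof.
move=> uv; apply: holds_orth_bot => _ _ [c ->] [c' ->].
by rewrite dotpZl dotpZr uv !mulr0.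
Qed.

Lemma holds_of_pi_perp_bot S z : holds (pi_fun (sperp S) z) (sbot R d) -> holds z S.
Proof. by move/(ax_pi_bot hM); apply: holds_le => v /perpK. Qed.

Lemma holds_line_of_gram a b n z : n != 0 ->
  dotp a b * dotp n n = dotp a n * dotp n b ->
  holds z (sline a) -> holds z (sline b) -> holds z (sline n).
Proof.
move=> n0 gram za zb; apply: holds_of_pi_perp_bot.
have nn0 : dotp n n != 0 by apply: contra_neq n0 => /dotp_self_eq0.
(* The Gram condition says that the projections of [a] and [b] onto [n^perp]
   are orthogonal. *)
pose proj v := v - (dotp n v / dotp n n) *: n.
have proj_orth : dotp (proj a) (proj b) = 0.
  rewrite /proj !(dotpBl, dotpBr, dotpZl, dotpZr) divfK // subrr mulr0 subr0.
  have -> : dotp a b = dotp a n * dotp n b / dotp n n by rewrite -gram mulfK.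
  by ring.
apply: (holds_line_orth_bot proj_orth).
  by apply: holds_le (ax_pi_i hM _ za) => v /sasaki_line_perp.
by apply: holds_le (ax_pi_i hM _ zb) => v /sasaki_line_perp.
Qed.

Lemma holds_comb a b e A g E z x y w : gram_triple a b e A g E -> 0 < E -> w != 0 ->
  g * w ^+ 2 * E = x * y * (A ^+ 2 - g ^+ 2) ->
  holds z (sline a) -> holds z (sline b) -> holds z (sline (comb a b e x y w)).
Proof.
move=> tr E0 w0 cone; have [ca cb ce] := comb_basis a b e.
apply: holds_line_of_gram.
  apply/eqP => n0; have := dotp_comb tr 0 0 1 x y w.
  rewrite ce n0 dotp0r => /esym/eqP; rewrite realc_eq0.
  have -> : (0 * x + 0 * y) * A + (0 * y + 0 * x) * g + 1 * w * E = w * E by ring.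
  by rewrite mulf_eq0 (negPf w0) (negPf (lt0r_neq0 E0)).
have := dotp_comb tr 1 0 0 x y w; rewrite ca => ->.
have := dotp_comb tr x y w 0 1 0; rewrite cb => ->.
by rewrite (gram_ab tr) (dotp_comb tr) -!rmorphM; congr (_%:C); nra.
Qed.

Lemma holds_bot_small_angle a b e A g E z : gram_triple a b e A g E ->
  0 < E -> 0 < g -> 3 * g < A ->
  holds z (sline a) -> holds z (sline b) -> holds z (sbot R d).
Proof.
move=> tr E0 g0 gA za zb.
have [x [y [cone orth]]] := small_angle_coeffs E0 g0 gA.
have z1 : holds z (sline (comb a b e x y 1)).
  by apply: holds_comb tr E0 (oner_neq0 _) _ za zb; rewrite cone expr1n mulr1.
have z2 : holds z (sline (comb a b e y x (-1))).
  apply: holds_comb tr E0 _ _ za zb; first by rewrite oppr_eq0 oner_neq0.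
  by rewrite sqrrN expr1n mulr1 (mulrC y) cone.
apply: (holds_line_orth_bot _ z1 z2).
by rewrite (dotp_comb tr) -(rmorph0 (real_complex R)); congr (_%:C); rewrite -orth; ring.
Qed.

Lemma holds_bot_descent (N : nat) a b e A g E z : gram_triple a b e A g E ->
  0 < A -> 0 < E -> 0 <= g -> (N%:R + 1) * g <= (N%:R - 1) * A ->
  holds z (sline a) -> holds z (sline b) -> holds z (sbot R d).
Proof.
elim: N a b e A g E => [|N IH] a b e A g E tr A0 E0 g0 NgA za zb.
  by move: NgA; rewrite add0r sub0r; lra.
move: g0; rewrite le_eqVlt => /predU1P [g00|gpos].
  by apply: holds_line_orth_bot za zb; rewrite (gram_ab tr) -g00 rmorph0.
have [gA|Ag] := ltP (3 * g) A; first exact: holds_bot_small_angle tr E0 gpos gA za zb.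
have NgA' : (N%:R + 2) * g <= N%:R * A by move: NgA; rewrite -natr1; lra.
have gA : g < A by have := ler0n R N; nra.
(* The choice of [c] makes [a + b +- c e] satisfy the hypothesis of [holds_comb]. *)
pose c := Num.sqrt ((A ^+ 2 - g ^+ 2) / (g * E)).
have gc : g * (c ^+ 2 * E) = A ^+ 2 - g ^+ 2.
  rewrite sqr_sqrtr; first by field; rewrite !lt0r_neq0.
  by apply: divr_ge0; [nra | apply/ltW/mulr_gt0].
have [c0 A'0 g'0 E'0 NgA''] := descent_arith (ler0n _ N) E0 gpos Ag NgA' gc.
apply: (IH _ _ _ _ _ _ (gram_triple_step c tr)) => //.
  by apply: holds_comb tr E0 c0 _ za zb; rewrite !mul1r -mulrA.
apply: holds_comb tr E0 _ _ za zb; first by rewrite oppr_eq0.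
by rewrite sqrrN !mul1r -mulrA.
Qed.

Definition jointly_bot p q := forall z, holds z p -> holds z q -> holds z (sbot R d).

Lemma span_jointly_bot (Q : subspace -> Prop) :
  (forall (b : subspace) q, Q b -> Q (sasaki b q)) ->
  (forall u (b : subspace), Q b -> sdisjoint (sline u) b -> jointly_bot (sline u) b) ->
  forall L (b : subspace), orth_seq L -> Q b -> sdisjoint (sspan L) b -> jointly_bot (sspan L) b.
Proof.
move=> Qsasaki Qline; elim=> [|u L IH] b oL Qb Lb z zL zb.
  by apply: holds_le zL => w; rewrite /= span_nil memv0 => /eqP.
set T := sspan (u :: L); set q := sjoin (sline u) (sperp T).
have Tu : T u by rewrite /= memv_span // mem_head.
have /(ax_pi_bot hM) zq : holds (pi_fun q z) (sbot R d).
  apply: (Qline u (sasaki b q)); [exact: Qsasaki | exact: sasaki_join_line_disjoint | |].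
    by apply: holds_le (ax_pi_i hM q zL) => v; apply: sasaki_join_line.
  exact: (ax_pi_i hM q zb).
apply: (IH b) zb => //; first by case/andP: oL.
  by move=> w Lw; apply: Lb; rewrite /= span_cons -[w]add0r memv_add ?mem0v.
by apply: holds_le zq => v /perp_join_line_perp [Tv uv]; apply: span_cons_perp oL Tv uv.
Qed.

Section Dim3.
Hypothesis d3 : (3 <= d)%N.

Lemma lines_jointly_bot u v :
  sdisjoint (sline u) (sline v) -> jointly_bot (sline u) (sline v).
Proof.
move=> uv z zu zv.
have [u0|u0] := eqVneq u 0; first by apply: holds_le zu => w [c ->]; rewrite u0 scaler0.
have [v0|v0] := eqVneq v 0; first by apply: holds_le zv => w [c ->]; rewrite v0 scaler0.
have [uv0|uv0] := eqVneq (dotp u v) 0; first exact: holds_line_orth_bot uv0 zu zv.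
have [mu [A [g [mu0 uuA vvA uvg [A0 g0]]]]] := normalize_pair u0 v0 uv0.
have zmu : holds z (sline (mu *: v)).
  by apply: holds_le zv => w [c ->]; exists (c / mu); rewrite scalerA divfK.
have [e e0 [ue ve]] := exists_orth u (mu *: v) d3.
have [E eeE E0] := complex_gt0_real (dotp_self_gt0 e0).
have tr : gram_triple u (mu *: v) e A g E by split.
have gA : g < A.
  rewrite ltNge; apply/negP => /(eq_of_gram uuA vvA uvg) muvu.
  by move/eqP: u0; apply; apply: uv; [exact: sline_id | exists mu].
have [N NgA] := exists_descent_length (ltW g0) gA.
exact: holds_bot_descent tr A0 E0 (ltW g0) NgA zu zmu.
Qed.

Lemma line_jointly_bot u (b : subspace) : sdisjoint (sline u) b -> jointly_bot (sline u) b.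
Proof.
move=> ub z zu zb; have [L [oL bL]] := subspace_orth_basis b.
have Qsasaki (b' : subspace) q : (exists v, b' = sline v) -> exists v, sasaki b' q = sline v.
  by case=> v ->; exact: sasaki_line.
have Qline u' (b' : subspace) : (exists v, b' = sline v) ->
    sdisjoint (sline u') b' -> jointly_bot (sline u') b'.
  by case=> v ->; exact: lines_jointly_bot.
apply: (span_jointly_bot Qsasaki Qline oL (ex_intro _ u erefl)) zu.
  by move=> w /bL bw uw; apply: ub uw bw.
by apply: holds_le zb => w /bL.
Qed.

Lemma disjoint_jointly_bot (a b : subspace) : sdisjoint a b -> jointly_bot a b.
Proof.
move=> ab z za zb; have [L [oL aL]] := subspace_orth_basis a.
apply: (span_jointly_bot (Q := fun _ => True) _ _ oL I) zb => //.
- by move=> u b' _; apply: line_jointly_bot.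
- by move=> w /aL aw bw; apply: ab aw bw.
- by apply: holds_le za => w /aL.
Qed.

Lemma holds_meet (a b : subspace) z : holds z a -> holds z b -> holds z (smeet a b).
Proof.
move=> za zb; apply: holds_of_pi_perp_bot.
by apply: (disjoint_jointly_bot (@sasaki_meet_disjoint _ _ a b)); apply: (ax_pi_i hM).
Qed.

Lemma holds_pi_pre q p w :
  holds (pi_fun q w) p -> holds w (sjoin (sperp q) (smeet p q)).
Proof.
(* [pi_q w] lies in [p /\ q]; projecting it further onto the part of [q]
   orthogonal to [p /\ q] gives bot, and (pi_c) transfers this to [w]. *)
move=> wp; set y := pi_fun q w; set a := smeet q (sperp (smeet p q)).
have yq : holds y q by apply: holds_le (ax_pi_i hM q (ax_top hM w)) => v [].
have ypq : holds y (smeet p q) := holds_meet wp yq.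
have aq : sle a q by move=> v [].
have /(ax_pi_c hM aq)/(ax_pi_bot hM) : holds (pi_fun a y) (sbot R d).
  by apply: holds_le (ax_pi_i hM a ypq) => v; apply: sasaki_perp => x [].
by apply: holds_le; apply: perp_meet_perp => v [].
Qed.

Lemma holds_pre t p x : holds (eval_term t x) p -> holds x (pre t p).
Proof.
elim: t p => [|U t IH|q t IH] p //= tp; apply: IH; first exact: (ax_u_e hM).
exact: holds_pi_pre.
Qed.

Lemma holds_hilbert_witness phi x : sat_conj phi x -> holds x (hilbert_witness phi).
Proof.
elim: phi => [|l phi IH] phix /=; first exact: (ax_top hM).
have {}IH : holds x (hilbert_witness phi) by apply: IH => l' l'phi; apply: phix; right.
case: l phix => // t p phix; apply: holds_meet IH; apply: holds_pre.
by apply: (phix (LPos t p)); left.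
Qed.

End Dim3.

Lemma holds_eval_hilbert t x Y :
  holds x Y -> holds (eval_term t x) (@eval_term R d (Hilbert_model R d) t Y).
Proof.
elim: t => [|U t IH|q t IH] xY //=; first exact/(ax_u_i hM)/IH.
exact/(ax_pi_i hM)/IH.
Qed.

End PQMTheory.

Theorem mainTheorem12 (R : realType) (d : nat) (hd : (3 <= d)%N)
  (M : structure R d) (hM : PQM M) (phi : conj_formula R d) :
  sat_exists M phi -> sat_exists (Hilbert_model R d) phi.
Proof.
case=> x phix; exists (hilbert_witness phi) => -[t p|t p] lphi /=.
  exact/eval_hilbert_le_pre/hilbert_witness_le.
move=> Kp; apply: (phix _ lphi); apply: (holds_le hM Kp).
exact/(holds_eval_hilbert hM)/(holds_hilbert_witness hM hd).
Qed.
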